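(* Let $d\geq 1$ be an integer and let $e_0,\dots,e_{d-1}$ be the standard basis of $\mathbb{C}^d$; write $\mathcal{B}^0=\{e_0,\dots,e_{d-1}\}$. Let $(p_n)_{n=0}^\infty$ be a sequence of orthogonal polynomials, i.e. each $p_n$ is a real polynomial of degree exactly $n$ and there is a positive weight function $w$ on $\mathbb{R}$ with $\int_{-\infty}^{\infty}p_j(x)p_i(x)w(x)\,dx=\delta_{ij}$ for all $i,j$. Let $x_0,\dots,x_{d-1}$ be the (real, distinct) zeros of $p_d$ and $y_0,\dots,y_{d-2}$ the (real, distinct) zeros of $p_{d-1}$ (there are none if $d=1$). Fix $\alpha\in\mathbb{R}$ such that $e^{ij\alpha}\notin\mathbb{R}$ for all $j\in\{1,\dots,d-1\}$. For $j=0,\dots,d-1$ define $$v^1_j=\big(p_0(x_j),p_1(x_j),\dots,p_{d-1}(x_j)\big),\qquad v^2_j=\big(p_0(x_j),e^{i\alpha}p_1(x_j),\dots,e^{i(d-1)\alpha}p_{d-1}(x_j)\big),$$ for $j=0,\dots,d-2$ define $$v^3_j=\big(p_0(y_j),p_1(y_j),\dots,p_{d-2}(y_j),0\big),\qquad v^4_j=\big(p_0(y_j),e^{i\alpha}p_1(y_j),\dots,e^{i(d-2)\alpha}p_{d-2}(y_j),0\big),$$ and set $v^3_{d-1}=v^4_{d-1}=e_{d-1}$. For $\ell=1,2,3,4$ let $\mathcal{B}^\ell=\{v^\ell_j/\|v^\ell_j\| : j=0,\dots,d-1\}$ (these are orthonormal bases of $\mathbb{C}^d$). Then the five orthonormal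 bases $\mathcal{B}^0,\dots,\mathcal{B}^4$ determine any pure state among all states: for every unit vector $\psi\in\mathbb{C}^d$ and every density matrix $\varrho$ on $\mathbb{C}^d$, if $|\langle v\mid\psi\rangle|^2=\langle v\mid \varrho\, v\rangle$ for every $v\in\mathcal{B}^0\cup\mathcal{B}^1\cup\mathcal{B}^2\cup\mathcal{B}^3\cup\mathcal{B}^4$, then $\varrho=|\psi\rangle\langle\psi|$.
   Context: A density matrix (state) is a positive semidefinite $d\times d$ complex matrix of trace one; a pure state is one of the form $|\psi\rangle\langle\psi|$ with $\psi$ a unit vector. The inner product $\langle\cdot\mid\cdot\rangle$ on $\mathbb{C}^d$ is linear in the second argument. *)

From HB Require Import structures.
From mathcomp Require Import all_boot all_order all_algebra.
From mathcomp Require Import all_classical all_reals all_analysis.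
From mathcomp.real_closed Require Import complex.

Set Implicit Arguments.
Unset Strict Implicit.
Unset Printing Implicit Defensive.

Import Order.TTheory GRing.Theory Num.Theory.
Local Open Scope ring_scope.

Section Defs.
Variable R : realType.
Local Notation C := (R[i]).

Definition orthonormal_polys (p : nat -> {poly R}) : Prop :=
  (forall n, size (p n) = n.+1) /\
  exists w : R -> R,
    (forall x, 0 < w x) /\
    (forall i j : nat,
       (@lebesgue_measure R).-integrable [set: R]
          (fun x => ((p j).[x] * (p i).[x] * w x)%:E) /\
       (\int[@lebesgue_measure R]_(x in [set: R])
          ((p j).[x] * (p i).[x] * w x)%:E = ((i == j)%:R)%:E)%E).

Definition rC (r : R) : C := Complex r 0.

Definition eia (alpha : R) (k : nat) : C :=
  Complex (cos (k%:R * alpha)) (sin (k%:R * alpha)).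

(** inner product on C^d, linear in the second argument *)
Definition inner d (u v : 'cV[C]_d) : C := \sum_(k < d) (u k 0)^* * v k 0.

Definition vnorm d (v : 'cV[C]_d) : C := sqrtC (\sum_(k < d) `|v k 0| ^+ 2).

Definition normalize d (v : 'cV[C]_d) : 'cV[C]_d := (vnorm v)^-1 *: v.

Definition adj m n (A : 'M[C]_(m, n)) : 'M[C]_(n, m) := (map_mx Num.conj A)^T.

Definition density_matrix d (rho : 'M[C]_d) : Prop :=
  adj rho = rho /\ (forall v : 'cV[C]_d, 0 <= inner v (rho *m v)) /\ \tr rho = 1.

Definition pure_state d (psi : 'cV[C]_d) : 'M[C]_d := psi *m adj psi.

Definition e_vec d (j : nat) : 'cV[C]_d := \col_(k < d) (k == j :> nat)%:R.

(** v^1_j and v^2_j; x is the enumeration of the zeros of p_d *)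
Definition v1 d (p : nat -> {poly R}) (x : nat -> R) (j : nat) : 'cV[C]_d :=
  \col_(k < d) rC (p k).[x j].
Definition v2 d (p : nat -> {poly R}) (alpha : R) (x : nat -> R) (j : nat)
  : 'cV[C]_d :=
  \col_(k < d) (eia alpha k * rC (p k).[x j]).

(** v^3_j and v^4_j; y is the enumeration of the zeros of p_{d-1};
    v^3_{d-1} = v^4_{d-1} = e_{d-1} *)
Definition v3 d (p : nat -> {poly R}) (y : nat -> R) (j : nat) : 'cV[C]_d :=
  if (j < d.-1)%N then
    \col_(k < d) (if (k < d.-1)%N then rC (p k).[y j] else 0)
  else e_vec d d.-1.
Definition v4 d (p : nat -> {poly R}) (alpha : R) (y : nat -> R) (j : nat)
  : 'cV[C]_d :=
  if (j < d.-1)%N then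
    \col_(k < d) (if (k < d.-1)%N then eia alpha k * rC (p k).[y j] else 0)
  else e_vec d d.-1.

End Defs.
Arguments e_vec {R} d j.

From HB Require Import structures.
From mathcomp Require Import all_boot all_order all_algebra.
From mathcomp Require Import all_classical all_reals all_analysis.
From mathcomp.real_closed Require Import complex.
From mathcomp Require Import ring lra zify.
Import Order.TTheory GRing.Theory Num.Theory.
Local Open Scope ring_scope.

Set Implicit Arguments.
Unset Strict Implicit.
Unset Printing Implicit Defensive.

(* Put D := rho - |psi><psi|: D is Hermitian, rho = D + |psi><psi| is positive
   semidefinite, and the standard basis gives D_kk = 0.  For a_k = 1 and for
   a_k = e^{ik alpha}, the function t |-> sum_{k,l} conj(a_k) a_l D_kl p_k(t) p_l(t)
   is a polynomial of degree at most 2d - 2 vanishing at the 2d - 1 points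
   x_j, y_j, which are distinct because consecutive orthonormal polynomials have
   no common zero; so it vanishes identically.
   Let n be the last index with psi_n <> 0.  Positivity kills the rows and
   columns of D beyond n, and D vanishes on [i, d) x [i, d) by descending
   induction on i.  At step i the coefficient of t^(i + n) only involves D_in and
   D_ni = conj D_in, and the two choices of a give Re D_in = 0 and
   Re (e^{i(n-i) alpha} D_in) = 0, hence D_in = 0.  Then
   conj(psi_n) e_i - conj(psi_i) e_n is orthogonal to psi and isotropic for D,
   so positivity puts it in the kernel of D, which clears row and column i. *)

Lemma quadratic_ge0_linear_coef_eq0 (F : realFieldType) (a b : F) :
  0 <= b -> (forall t, 0 <= t ^+ 2 * b - 2 * t * a) -> a = 0.
Proof.
move=> b0 ht; have := ht (a / (b + 1)).
have b1 : b + 1 != 0 by rewrite lt0r_neq0 // ltr_wpDl.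
have -> : (a / (b + 1)) ^+ 2 * b - 2 * (a / (b + 1)) * a
          = - (a ^+ 2 * (b + 2)) / (b + 1) ^+ 2 by field.
rewrite pmulr_lge0 ?invr_gt0 ?exprn_gt0 ?ltr_wpDl // oppr_ge0 => h.
apply/eqP; rewrite -sqrf_eq0 eq_le sqr_ge0 andbT.
by rewrite -(pmulr_lle0 _ (ltr_wpDl b0 (ltr0Sn _ 1))).
Qed.

Lemma nonreal_conj_add_eq0 (R : rcfType) (z w : R[i]) : w \isn't Num.real ->
  z + z^* = 0 -> w * z + (w * z)^* = 0 -> z = 0.
Proof.
case: z => z1 z2; case: w => c s; rewrite complex_real => s0.
move=> /eqP; rewrite eq_complex /= => /andP[/eqP h1 _].
move=> /eqP; rewrite eq_complex /= => /andP[/eqP h2 _].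
have z1_0 : z1 = 0 by lra.
have /eqP : s * z2 = 0 by move: h2; rewrite z1_0 mulr0 sub0r; lra.
rewrite mulf_eq0 (negbTE s0) /= => /eqP z2_0.
by rewrite z1_0 z2_0.
Qed.

Lemma rCE (R : realType) (r : R) : rC r = r%:C%C.
Proof. by []. Qed.

Section PolyBasis.
Variables (F : fieldType) (p : nat -> {poly F}).
Hypothesis size_p : forall n, size (p n) = n.+1.

Lemma lead_coef_basis n : lead_coef (p n) = (p n)`_n.
Proof. by rewrite lead_coefE size_p. Qed.

Lemma lead_coef_basis_neq0 n : lead_coef (p n) != 0.
Proof. by rewrite lead_coef_eq0 -size_poly_eq0 size_p. Qed.

Lemma coef_basis_mul_top k l :
  (p k * p l)`_(k + l) = lead_coef (p k) * lead_coef (p l).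
Proof.
rewrite -lead_coefM lead_coefE size_mul -?size_poly_eq0 ?size_p //.
by rewrite addSn addnS.
Qed.

Lemma coef_basis_mul_small k l n : (k + l < n)%N -> (p k * p l)`_n = 0.
Proof.
move=> kln; apply: nth_default; rewrite (leq_trans (size_polyMleq _ _)) // !size_p.
by rewrite addSn addnS.
Qed.

Lemma poly_basis_span N (q : {poly F}) : (size q <= N)%N ->
  exists a : nat -> F, q = \sum_(k < N) a k *: p k.
Proof.
elim: N q => [|N IH] q q_size.
  by exists (fun=> 0); rewrite big_ord0; exact/size_poly_leq0P.
set c := q`_N / lead_coef (p N).
have [a qE] : exists a : nat -> F, q - c *: p N = \sum_(k < N) a k *: p k.
  apply: IH; apply/leq_sizeP => j j_ge; rewrite coefB coefZ.
  have [->|j_neq] := eqVneq j N.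
    by rewrite -lead_coef_basis divfK ?subrr ?lead_coef_basis_neq0.
  have Nj : (N < j)%N by rewrite ltn_neqAle eq_sym j_neq.
  by rewrite !nth_default ?mulr0 ?subr0 ?size_p // (leq_trans q_size).
exists (fun k => if k == N then c else a k).
rewrite big_ord_recr /= eqxx -[q](subrK (c *: p N)) qE; congr (_ + _).
by apply: eq_bigr => k _; rewrite ltn_eqF.
Qed.

End PolyBasis.

Section InnerProduct.
Variables (R : realType) (d : nat).
Local Notation C := R[i].
Implicit Types (u v w : 'cV[C]_d) (M : 'M[C]_d).

Lemma innerDr u v w : inner u (v + w) = inner u v + inner u w.
Proof. by rewrite /inner -big_split; apply: eq_bigr => k _; rewrite mxE mulrDr. Qed.

Lemma innerZr u v c : inner u (c *: v) = c * inner u v.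
Proof. by rewrite /inner mulr_sumr; apply: eq_bigr => k _; rewrite mxE mulrCA. Qed.

Lemma inner0r u : inner u 0 = 0.
Proof. by have := innerZr u 0 0; rewrite scale0r mul0r. Qed.

Lemma innerBr u v w : inner u (v - w) = inner u v - inner u w.
Proof. by rewrite innerDr -scaleN1r innerZr mulN1r. Qed.

Lemma conj_inner u v : (inner u v)^* = inner v u.
Proof.
rewrite /inner rmorph_sum; apply: eq_bigr => k _.
by rewrite rmorphM /= conjCK mulrC.
Qed.

Lemma innerZl u v c : inner (c *: u) v = c^* * inner u v.
Proof.
by rewrite -conj_inner innerZr rmorphM /= conj_inner.
Qed.

Lemma innerBl u v w : inner (u - v) w = inner u w - inner v w.
Proof. by rewrite -conj_inner innerBr rmorphB /= !conj_inner. Qed.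

Lemma hermitian_inner M v w :
  adj M = M -> inner v (M *m w) = (inner w (M *m v))^*.
Proof.
move=> M_herm; have MC k l : M k l = (M l k)^* by rewrite -{1}M_herm !mxE.
rewrite conj_inner /inner.
under eq_bigr => k _ do rewrite mxE mulr_sumr.
under [RHS]eq_bigr => k _ do rewrite mxE rmorph_sum mulr_suml.
rewrite exchange_big /=; apply: eq_bigr => k _; apply: eq_bigr => l _.
by rewrite MC rmorphM; ring.
Qed.

Lemma inner_self_ge0 v : 0 <= inner v v.
Proof. by rewrite sumr_ge0 // => k _; rewrite -normCKC exprn_ge0. Qed.

Lemma inner_self_eq0 v : inner v v = 0 -> v = 0.
Proof.
move=> /eqP; rewrite psumr_eq0 => [/allP v0|k _]; last by rewrite -normCKC exprn_ge0.
apply/matrixP => k l; rewrite (ord1 l) !mxE.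
by have /implyP/(_ isT) := v0 k (mem_index_enum k); rewrite mulf_eq0 conjC_eq0 orbb => /eqP.
Qed.

Lemma e_vecE (j : 'I_d) : e_vec d j = delta_mx j 0 :> 'cV[C]_d.
Proof. by apply/matrixP => k l; rewrite (ord1 l) !mxE eqxx andbT. Qed.

Lemma inner_e_vecl (j : 'I_d) v : inner (e_vec d j) v = v j 0.
Proof.
rewrite /inner (bigD1 j) //= big1 => [|k /negbTE kj]; rewrite e_vecE mxE ?kj.
  by rewrite !eqxx rmorph1 mul1r addr0.
by rewrite rmorph0 mul0r.
Qed.

Lemma inner_e_vecr (j : 'I_d) v : inner v (e_vec d j) = (v j 0)^*.
Proof. by rewrite -conj_inner inner_e_vecl. Qed.

Lemma mulmx_e_vec M (j : 'I_d) : M *m e_vec d j = col j M.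
Proof. by rewrite e_vecE colE. Qed.

Lemma inner_e_vec_mulmx M (j k : 'I_d) :
  inner (e_vec d j) (M *m e_vec d k) = M j k.
Proof. by rewrite mulmx_e_vec inner_e_vecl mxE. Qed.

Lemma psd_mulmx_eq0 M v :
  adj M = M -> (forall u, 0 <= inner u (M *m u)) ->
  inner v (M *m v) = 0 -> M *m v = 0.
Proof.
move=> M_herm M_psd v0; set w := M *m v.
have real_ge0 (z : C) : 0 <= z -> z = (complex.Re z)%:C%C /\ 0 <= complex.Re z.
  by move=> z0; rewrite -ler0c RRe_real ?ger0_real.
have [ea a0] := real_ge0 _ (inner_self_ge0 w).
have [eb b0] := real_ge0 _ (M_psd w).
(* For real t the form at v - t w is t^2 <w, M w> - 2 t <w, w>. *)
suff a_eq0 : complex.Re (inner w w) = 0 by apply: inner_self_eq0; rewrite ea a_eq0.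
apply: (quadratic_ge0_linear_coef_eq0 b0) => t; rewrite -ler0c.
have := M_psd (v - t%:C%C *: w); congr (0 <= _).
rewrite mulmxBr -scalemxAr innerBr !innerZr !innerBl !innerZl v0.
have conj_t : (t%:C%C)^* = t%:C%C :> C by exact: conjc_real.
rewrite (hermitian_inner v w M_herm) -/w conj_inner conj_t.
set a := complex.Re (inner w w) in ea *; set b := complex.Re _ in eb *.
by rewrite ea eb !rmorphB !rmorphM /= rmorphMn rmorph1; ring.
Qed.

Lemma pure_state_mulmx (psi : 'cV[C]_d) v :
  pure_state psi *m v = inner psi v *: psi.
Proof.
apply/matrixP => k l; rewrite (ord1 l) /pure_state -mulmxA !mxE big_ord1 !mxE mulrC.
by congr (_ * _); apply: eq_bigr => j _; rewrite !mxE.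
Qed.

Lemma inner_pure_state (psi : 'cV[C]_d) v :
  inner v (pure_state psi *m v) = `|inner v psi| ^+ 2.
Proof. by rewrite pure_state_mulmx innerZr -conj_inner normCK mulrC. Qed.

End InnerProduct.

Section Measurement.
Variables (R : realType) (d : nat).
Local Notation C := R[i].
Implicit Types (u v : 'cV[C]_d) (M rho : 'M[C]_d).

Lemma measurement_quad_eq0 rho psi v :
  `|inner v psi| ^+ 2 = inner v (rho *m v) ->
  inner v ((rho - pure_state psi) *m v) = 0.
Proof. by rewrite mulmxBl innerBr inner_pure_state => ->; rewrite subrr. Qed.

Lemma vnorm_eq0 v : vnorm v = 0 -> v = 0.
Proof.
move/eqP; rewrite sqrtC_eq0 psumr_eq0 => [/allP v0|k _]; last exact/exprn_ge0/normr_ge0.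
apply/matrixP => k l; rewrite (ord1 l) mxE.
by move: (v0 k (mem_index_enum k)); rewrite sqrf_eq0 normr_eq0 => /eqP.
Qed.

Lemma normalize_quad_eq0 M u : u != 0 ->
  inner (normalize u) (M *m normalize u) = 0 -> inner u (M *m u) = 0.
Proof.
move=> u0; rewrite /normalize -scalemxAr innerZr innerZl => /eqP.
rewrite !mulf_eq0 conjC_eq0 invr_eq0 orbA orbb.
case/orP => [/eqP/vnorm_eq0 u_eq0|/eqP //].
by rewrite u_eq0 eqxx in u0.
Qed.

Lemma diff_pure_mulmx_eq0 rho psi v :
  adj rho = rho -> (forall u, 0 <= inner u (rho *m u)) -> inner psi v = 0 ->
  inner v ((rho - pure_state psi) *m v) = 0 -> (rho - pure_state psi) *m v = 0.
Proof.
move=> rho_herm rho_psd psi_v.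
rewrite mulmxBl pure_state_mulmx psi_v scale0r subr0.
exact: psd_mulmx_eq0.
Qed.

End Measurement.

Section QuadraticPolynomial.
Variables (R : realType) (d : nat) (p : nat -> {poly R}).
Hypothesis size_p : forall n, size (p n) = n.+1.
Local Notation C := R[i].
Implicit Types (D : 'M[C]_d) (a : nat -> C).

(* pvec (fun=> 1) and pvec (eia alpha) are the paper's v^1 and v^2, and also
   v^3 and v^4 at the zeros of p_{d-1} (see pvec_truncated). *)
Definition pvec (a : nat -> C) (t : R) : 'cV[C]_d :=
  \col_(k < d) (a k * rC (p k).[t]).

Definition quad_poly (D : 'M[C]_d) (a : nat -> C) : {poly C} :=
  \sum_(k < d) \sum_(l < d)
     ((a k)^* * D k l * a l) *: map_poly (real_complex R) (p k * p l).

Lemma horner_quad_poly D a t :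
  (quad_poly D a).[rC t] = inner (pvec a t) (D *m pvec a t).
Proof.
rewrite horner_sum; apply: eq_bigr => k _.
rewrite horner_sum !mxE mulr_sumr; apply: eq_bigr => l _.
rewrite hornerZ horner_map /= !mxE hornerM !rmorphM /=.
by rewrite !rCE [(_%:C%C)^*]conjc_real; ring.
Qed.

Lemma size_quad_poly D a : (size (quad_poly D a) <= (2 * d).-1)%N.
Proof.
rewrite /quad_poly pair_bigA /=; apply: (leq_trans (size_sum _ _ _)).
apply/bigmax_leqP => -[k l] _ /=.
rewrite (leq_trans (size_scale_leq _ _)) // size_map_poly.
rewrite (leq_trans (size_polyMleq _ _)) // !size_p.
by have := ltn_ord k; have := ltn_ord l; lia.
Qed.

Lemma coef_quad_poly_pair D a (i j : 'I_d) : i != j ->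
  (forall k l : 'I_d, (i + j <= k + l)%N ->
     (k, l) != (i, j) -> (k, l) != (j, i) -> D k l = 0) ->
  (quad_poly D a)`_(i + j) =
    ((a i)^* * D i j * a j + (a j)^* * D j i * a i) *
      rC (lead_coef (p i) * lead_coef (p j)).
Proof.
move=> ij D0; rewrite /quad_poly pair_bigA coef_sum /=.
have ji_ij : (j, i) != (i, j) by rewrite xpair_eqE (negbTE ij) andbF.
rewrite (bigD1 (i, j)) // (bigD1 (j, i)) //= big1 ?addr0 => [|[k l] /andP[kl_ij kl_ji]].
  rewrite !coefZ !coef_map /= [(p j * _)]mulrC (coef_basis_mul_top size_p) rCE.
  by rewrite -mulrDl.
rewrite coefZ coef_map /=.
have [ijkl|klij] := leqP (i + j) (k + l); first by rewrite D0 // mulr0 !mul0r.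
by rewrite (coef_basis_mul_small size_p) // mulr0.
Qed.

Lemma pvec_neq0 a t : (0 < d)%N -> a 0%N != 0 -> pvec a t != 0.
Proof.
move=> d_gt0 a0; apply/eqP => /matrixP /(_ (Ordinal d_gt0) 0); rewrite !mxE /=.
have p0E : (p 0%N).[t] = lead_coef (p 0%N).
  by rewrite [p 0%N]size1_polyC ?size_p // hornerC lead_coefC.
apply/eqP; rewrite mulf_eq0 (negbTE a0) rCE /= p0E.
by rewrite eq_complex /= eqxx andbT (lead_coef_basis_neq0 size_p).
Qed.

Lemma quad_poly_eq0 D a (ts : seq R) : uniq ts -> ((2 * d).-1 <= size ts)%N ->
  (forall t, t \in ts -> inner (pvec a t) (D *m pvec a t) = 0) ->
  quad_poly D a = 0.
Proof.
move=> ts_uniq ts_size ts_root; apply: (roots_geq_poly_eq0 (rs := map (@rC R) ts)).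
- by apply/allP => _ /mapP [t tts ->]; rewrite /root horner_quad_poly ts_root.
- by rewrite map_inj_uniq // => r s [].
- by rewrite size_map (leq_trans (size_quad_poly _ _)).
Qed.

Lemma measured_pvec_quad_eq0 (rho : 'M[C]_d) psi a t :
  (0 < d)%N -> a 0%N != 0 ->
  let v := normalize (pvec a t) in `|inner v psi| ^+ 2 = inner v (rho *m v) ->
  inner (pvec a t) ((rho - pure_state psi) *m pvec a t) = 0.
Proof.
by move=> d_gt0 a0 v /measurement_quad_eq0; apply/normalize_quad_eq0/pvec_neq0.
Qed.

Lemma pvec_truncated a t : root (p d.-1) t ->
  \col_(k < d) (if (k < d.-1)%N then a k * rC (p k).[t] else 0) = pvec a t.
Proof.
move=> /eqP pt0; apply/matrixP => k l; rewrite !mxE; case: ifPn => // /negbTE k_ge.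
have -> : val k = d.-1.
  have k_lt : (k < d.-1.+1)%N by rewrite prednK ?ltn_ord // (leq_ltn_trans _ (ltn_ord k)).
  by apply/eqP; rewrite eqn_leq -ltnS k_lt leqNgt k_ge.
by rewrite pt0 mulr0.
Qed.

End QuadraticPolynomial.

Section WeightedIntegral.
Variables (R : realType) (w : R -> R).
Local Notation mu := (@lebesgue_measure R).

Definition has_wintegral (q : {poly R}) (c : R) : Prop :=
  mu.-integrable [set: R] (fun x => (q.[x] * w x)%:E) /\
  (\int[mu]_(x in [set: R]) (q.[x] * w x)%:E = c%:E)%E.

Lemma has_wintegral0 : has_wintegral 0 0.
Proof.
rewrite /has_wintegral.
have -> : (fun x => ((0 : {poly R}).[x] * w x)%:E) = cst 0%E.
  by apply/funext => x; rewrite horner0 mul0r.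
by split; [exact: integrable0 | exact: integral0].
Qed.

Lemma has_wintegralD q a r b :
  has_wintegral q a -> has_wintegral r b -> has_wintegral (q + r) (a + b).
Proof.
move=> [qi qa] [ri rb]; rewrite /has_wintegral.
have -> : (fun x => ((q + r).[x] * w x)%:E) =
          (fun x => (q.[x] * w x)%:E + (r.[x] * w x)%:E)%E.
  by apply/funext => x; rewrite hornerD mulrDl EFinD.
by split; [exact: integrableD | rewrite integralD // qa rb].
Qed.

Lemma has_wintegralZ q a k : has_wintegral q a -> has_wintegral (k *: q) (k * a).
Proof.
move=> [qi qa]; rewrite /has_wintegral.
have -> : (fun x => ((k *: q).[x] * w x)%:E) = (fun x => k%:E * (q.[x] * w x)%:E)%E.
  by apply/funext => x; rewrite hornerZ -mulrA EFinM.
by split; [exact: integrableZl | rewrite integralZl // qa EFinM].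
Qed.

Lemma has_wintegral_sum (I : Type) (r : seq I) (F : I -> {poly R}) (c : I -> R) :
  (forall i, has_wintegral (F i) (c i)) ->
  has_wintegral (\sum_(i <- r) F i) (\sum_(i <- r) c i).
Proof.
by move=> Fc; apply: (big_ind2 has_wintegral has_wintegral0 has_wintegralD).
Qed.

Lemma has_wintegral_uniq q a b : has_wintegral q a -> has_wintegral q b -> a = b.
Proof. by move=> [_ qa] [_ qb]; move: qa; rewrite qb => -[]. Qed.

Variable p : nat -> {poly R}.
Hypothesis size_p : forall n, size (p n) = n.+1.
Hypothesis p_orth : forall i j, has_wintegral (p j * p i) (i == j)%:R.

Lemma has_wintegral_p_mul n (q : {poly R}) : (size q <= n.+1)%N ->
  has_wintegral (p n * q) (q`_n / lead_coef (p n)).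
Proof.
case/(poly_basis_span size_p) => a ->.
have -> : (\sum_(k < n.+1) a k *: p k)`_n / lead_coef (p n) =
          \sum_(k < n.+1) a k * (k == n :> nat)%:R.
  rewrite coef_sum !big_ord_recr /= !big1 ?add0r => [|k _|k _].
  - by rewrite coefZ -(lead_coef_basis size_p) eqxx mulr1 mulfK ?(lead_coef_basis_neq0 size_p).
  - by rewrite ltn_eqF ?mulr0.
  - by rewrite coefZ nth_default ?mulr0 // size_p.
rewrite mulr_sumr; apply: has_wintegral_sum => k.
by rewrite -scalerAr; apply: has_wintegralZ.
Qed.

Lemma consecutive_no_common_root n z : root (p n.+1) z -> root (p n) z -> False.
Proof.
have size_cofactor m Q : p m = Q * ('X - z%:P) -> size Q = m.
  move=> pmE; have := size_p m; rewrite pmE.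
  have [->|Q_neq0] := eqVneq Q 0; first by rewrite mul0r size_poly0.
  by rewrite size_Mmonic ?monicXsubC // size_XsubC addn2 => -[].
case/factor_theorem => A /[dup] /size_cofactor size_A pSnE.
case/factor_theorem => B /[dup] /size_cofactor size_B pnE.
have intA := has_wintegral_p_mul (eq_leq size_A).
have intB := has_wintegral_p_mul (n := n.+1) (leqW (leqW (eq_leq size_B))).
have ApB : p n * A = p n.+1 * B by rewrite pSnE pnE; ring.
rewrite ApB in intA.
have /eqP := has_wintegral_uniq intA intB.
rewrite [B`_n.+1]nth_default ?size_B // mul0r mulf_eq0 invr_eq0 !lead_coef_eq0.
have -> : A`_n = lead_coef A by rewrite lead_coefE size_A.
by rewrite lead_coef_eq0 -!size_poly_eq0 size_A size_p.
Qed.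

End WeightedIntegral.

Lemma orthonormal_no_common_root (R : realType) (p : nat -> {poly R}) n z :
  orthonormal_polys p -> root (p n.+1) z -> root (p n) z -> False.
Proof.
case=> size_p [w [_ p_orth]]; apply: (consecutive_no_common_root size_p (w := w)).
move=> i j; have [pi_int pi_eq] := p_orth i j.
by split; under eq_fun => x do rewrite hornerM.
Qed.

Section Phases.
Variables (R : realType) (alpha : R).

Lemma eia0 : eia alpha 0 = 1.
Proof. by rewrite /eia mul0r cos0 sin0. Qed.

Lemma eiaD m n : eia alpha (m + n) = eia alpha m * eia alpha n.
Proof.
rewrite /eia natrD mulrDl cosD sinD; apply/eqP; rewrite eq_complex /=.
by apply/andP; split; apply/eqP; ring.
Qed.

Lemma conj_eiaM n : (eia alpha n)^* * eia alpha n = 1.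
Proof.
rewrite /eia; apply/eqP; rewrite eq_complex /=.
apply/andP; split; apply/eqP; last by ring.
by rewrite -[RHS](cos2Dsin2 (n%:R * alpha)); ring.
Qed.

End Phases.

Definition zero_corner (R : realType) d (M : 'M[R[i]]_d) (m : nat) : Prop :=
  forall k l : 'I_d, (m <= k)%N -> (m <= l)%N -> M k l = 0.

Section PureStateDetermination.
Variables (R : realType) (d : nat) (p : nat -> {poly R}) (alpha : R).
Variables (rho : 'M[R[i]]_d) (psi : 'cV[R[i]]_d).
Hypothesis size_p : forall n, size (p n) = n.+1.
Hypothesis eia_nreal : forall j, (0 < j < d)%N -> eia alpha j \isn't Num.real.
Hypothesis rho_herm : adj rho = rho.
Hypothesis rho_psd : forall v, 0 <= inner v (rho *m v).
Local Notation D := (rho - pure_state psi).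
Hypothesis D_diag : forall k, D k k = 0.
Hypothesis quad_poly1 : quad_poly p D (fun=> 1) = 0.
Hypothesis quad_poly_eia : quad_poly p D (eia alpha) = 0.

Lemma diff_pure_entry k l : D k l = rho k l - psi k 0 * (psi l 0)^*.
Proof. by rewrite !mxE big_ord1 !mxE. Qed.

Lemma diff_pure_hermitian k l : D k l = (D l k)^*.
Proof.
have rhoC : rho k l = (rho l k)^* by rewrite -{1}rho_herm !mxE.
by rewrite !diff_pure_entry rhoC rmorphB rmorphM /= conjCK mulrC.
Qed.

Lemma diff_pure_col_eq0 k : psi k 0 = 0 -> forall j, D j k = 0.
Proof.
move=> psi_k j; have : D *m e_vec d k = 0.
  apply: diff_pure_mulmx_eq0 => //; first by rewrite inner_e_vecr psi_k conjC0.
  by rewrite inner_e_vec_mulmx.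
by rewrite mulmx_e_vec => /matrixP /(_ j 0); rewrite !mxE.
Qed.

Lemma diff_pure_row_eq0 k : psi k 0 = 0 -> forall j, D k j = 0.
Proof. by move=> psi_k j; rewrite diff_pure_hermitian diff_pure_col_eq0 ?conjC0. Qed.

Section Corner.
Variable n : 'I_d.
Hypothesis psi_n : psi n 0 != 0.
Hypothesis psi_above : forall k : 'I_d, (n < k)%N -> psi k 0 = 0.

Lemma diff_pure_eq0_beyond (k l : 'I_d) : (n < k)%N || (n < l)%N -> D k l = 0.
Proof.
by case/orP => [/psi_above/diff_pure_row_eq0 | /psi_above/diff_pure_col_eq0] ->.
Qed.

Lemma zero_corner_last : zero_corner D n.
Proof.
move=> k l nk nl.
have [nk'|kn] := ltnP n k; first by rewrite diff_pure_eq0_beyond ?nk'.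
have [nl'|ln] := ltnP n l; first by rewrite diff_pure_eq0_beyond ?nl' ?orbT.
have /val_inj -> : val k = n by apply/eqP; rewrite eqn_leq kn nk.
have /val_inj -> : val l = n by apply/eqP; rewrite eqn_leq ln nl.
exact: D_diag.
Qed.

Lemma diff_pure_corner_entry_eq0 (i : 'I_d) : (i < n)%N ->
  zero_corner D i.+1 -> D i n = 0.
Proof.
move=> i_lt_n corner; have in_neq : i != n by rewrite neq_ltn i_lt_n.
have D_pair (k l : 'I_d) : (i + n <= k + l)%N ->
    (k, l) != (i, n) -> (k, l) != (n, i) -> D k l = 0.
  move=> kl; rewrite !xpair_eqE -!val_eqE /= => kl_in kl_ni.
  have [/andP[ik il] | kl_out] := boolP ((i < k) && (i < l))%N; first exact: corner.
  apply: diff_pure_eq0_beyond; lia.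
have lc_neq0 : rC (lead_coef (p i) * lead_coef (p n)) != 0.
  by rewrite eq_complex /= eqxx andbT mulf_neq0 ?lead_coef_basis_neq0.
have coef_eq0 a : quad_poly p D a = 0 ->
    (a i)^* * D i n * a n + (a n)^* * D n i * a i = 0.
  move=> qa; have := coef_quad_poly_pair size_p a in_neq D_pair.
  rewrite qa coef0 => /esym/eqP.
  by rewrite mulf_eq0 (negbTE lc_neq0) orbF => /eqP.
have w_nreal : eia alpha (n - i) \isn't Num.real.
  by apply: eia_nreal; have := ltn_ord n; lia.
apply: (@nonreal_conj_add_eq0 R _ _ w_nreal).
  have := coef_eq0 _ quad_poly1.
  by rewrite conjC1 !mulr1 !mul1r (diff_pure_hermitian n i).
have := coef_eq0 _ quad_poly_eia.
have n_i : n = (i + (n - i))%N :> nat by rewrite subnKC // ltnW.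
rewrite {1 2}n_i eiaD (diff_pure_hermitian n i) rmorphM /= => <-.
have := conj_eiaM alpha i; set c := eia alpha i => cc.
by rewrite rmorphM -[LHS]mul1r -cc; ring.
Qed.

Lemma zero_corner_step (i : 'I_d) : (i < n)%N ->
  zero_corner D i.+1 -> zero_corner D i.
Proof.
move=> i_lt_n corner; have D_in := diff_pure_corner_entry_eq0 i_lt_n corner.
pose v := (psi n 0)^* *: e_vec d i - (psi i 0)^* *: e_vec d n.
have Dv : D *m v = 0.
  apply: diff_pure_mulmx_eq0 => //.
    by rewrite innerBr !innerZr !inner_e_vecr mulrC subrr.
  rewrite mulmxBr -!scalemxAr !innerBr !innerBl !innerZr !innerZl.
  rewrite !inner_e_vec_mulmx !D_diag (diff_pure_hermitian n i) D_in conjC0.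
  by rewrite !(mulr0, mul0r, subrr).
have D_col_i (k : 'I_d) : (i < k)%N -> D k i = 0.
  move=> ik; have := congr1 (inner (e_vec d k)) Dv.
  rewrite mulmxBr -!scalemxAr innerBr !innerZr !inner_e_vec_mulmx inner0r.
  rewrite (corner k n ik i_lt_n) mulr0 subr0 => /eqP.
  by rewrite mulf_eq0 conjC_eq0 (negbTE psi_n) => /eqP.
move=> k l; rewrite leq_eqVlt => /orP[/eqP/val_inj <- | ik].
  rewrite leq_eqVlt => /orP[/eqP/val_inj <- | il]; first exact: D_diag.
  by rewrite diff_pure_hermitian D_col_i ?conjC0.
rewrite leq_eqVlt => /orP[/eqP/val_inj <- | il]; first exact: D_col_i.
exact: corner.
Qed.

Lemma zero_corner_first : zero_corner D 0.
Proof.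
suff corner m : (m <= n)%N -> zero_corner D (n - m) by rewrite -(subnn n); exact: corner.
elim: m => [_|m IH m_lt_n]; first by rewrite subn0; exact: zero_corner_last.
have i_lt_d : (n - m.+1 < d)%N by rewrite (leq_ltn_trans (leq_subr _ _)).
apply: (zero_corner_step (i := Ordinal i_lt_d)) => /=; first lia.
by rewrite subnSK //; apply/IH/ltnW.
Qed.

End Corner.

Lemma pure_state_determined : rho = pure_state psi.
Proof.
apply/subr0_eq; suff corner : zero_corner D 0.
  by apply/matrixP => k l; rewrite [RHS]mxE corner.
have [psi0 | [m psi_m]] : (forall k : 'I_d, psi k 0 = 0) \/ exists m, psi m 0 != 0.
  case: (pickP (fun m => psi m 0 != 0)) => [m psi_m | psi0]; first by right; exists m.
  by left => k; apply/eqP/negbFE/psi0.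
  by move=> k l _ _; apply: diff_pure_col_eq0.
have [n psi_n n_max] := @arg_maxnP _ m (fun k => psi k 0 != 0) val psi_m.
apply: (zero_corner_first psi_n) => k nk; apply/eqP/negPn/negP => /n_max kn.
by move: kn; rewrite /geq /= leqNgt nk.
Qed.

End PureStateDetermination.

Section Nodes.
Variables (R : realType) (d : nat) (p : nat -> {poly R}) (x y : nat -> R).
Hypothesis d_gt0 : (0 < d)%N.
Hypothesis p_orth : orthonormal_polys p.
Hypothesis x_root : forall j, (j < d)%N -> root (p d) (x j).
Hypothesis x_inj : forall i j, (i < d)%N -> (j < d)%N -> x i = x j -> i = j.
Hypothesis y_root : forall j, (j < d.-1)%N -> root (p d.-1) (y j).
Hypothesis y_inj : forall i j, (i < d.-1)%N -> (j < d.-1)%N -> y i = y j -> i = j.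

Lemma uniq_nodes : uniq ([seq x j | j <- iota 0 d] ++ [seq y j | j <- iota 0 d.-1]).
Proof.
rewrite cat_uniq !map_inj_in_uniq ?iota_uniq ?andbT => [|i j|i j]; rewrite ?mem_iota /=.
- apply/hasPn => _ /mapP [j j_lt ->]; apply/mapP => -[i i_lt yx].
  move: i_lt j_lt; rewrite !mem_iota /= => i_lt j_lt.
  apply: (orthonormal_no_common_root (n := d.-1) (z := y j) p_orth); last exact: y_root.
  by rewrite prednK // yx; apply: x_root.
- exact: y_inj.
- exact: x_inj.
Qed.

Lemma quad_poly_eq0_nodes (D : 'M[R[i]]_d) a :
  (forall j : 'I_d, inner (pvec d p a (x j)) (D *m pvec d p a (x j)) = 0) ->
  (forall j : 'I_d, (j < d.-1)%N ->
     inner (pvec d p a (y j)) (D *m pvec d p a (y j)) = 0) ->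
  quad_poly p D a = 0.
Proof.
move=> x_quad y_quad; apply: (quad_poly_eq0 p_orth.1 uniq_nodes).
  by rewrite size_cat !size_map !size_iota; lia.
move=> t; rewrite mem_cat => /orP[] /mapP [j]; rewrite mem_iota /= => j_lt ->.
  exact: (x_quad (Ordinal j_lt)).
have j_lt_d : (j < d)%N by lia.
exact: (y_quad (Ordinal j_lt_d)).
Qed.

Lemma v1_pvec j : v1 d p x j = pvec d p (fun=> 1) (x j).
Proof. by apply/matrixP => k l; rewrite !mxE mul1r. Qed.

Lemma v3_pvec j : (j < d.-1)%N -> v3 d p y j = pvec d p (fun=> 1) (y j).
Proof.
move=> j_lt; rewrite /v3 j_lt -(pvec_truncated _ (y_root j_lt)).
by apply/matrixP => k l; rewrite !mxE mul1r.
Qed.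

Lemma v4_pvec alpha j : (j < d.-1)%N -> v4 d p alpha y j = pvec d p (eia alpha) (y j).
Proof. by move=> j_lt; rewrite /v4 j_lt (pvec_truncated _ (y_root j_lt)). Qed.

End Nodes.

Theorem theorem1 (R : realType) (d : nat) (p : nat -> {poly R})
  (x y : nat -> R) (alpha : R) :
  (0 < d)%N ->
  orthonormal_polys p ->
  (* x_0, ..., x_{d-1} are the distinct zeros of p_d *)
  (forall j, (j < d)%N -> root (p d) (x j)) ->
  (forall i j, (i < d)%N -> (j < d)%N -> x i = x j -> i = j) ->
  (* y_0, ..., y_{d-2} are the distinct zeros of p_{d-1} *)
  (forall j, (j < d.-1)%N -> root (p d.-1) (y j)) ->
  (forall i j, (i < d.-1)%N -> (j < d.-1)%N -> y i = y j -> i = j) ->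
  (forall j, (0 < j < d)%N -> eia alpha j \isn't Num.real) ->
  forall (psi : 'cV[R[i]]_d) (rho : 'M[R[i]]_d),
    inner psi psi = 1 ->
    density_matrix rho ->
    (forall j : 'I_d,
       let v := e_vec d j in `|inner v psi| ^+ 2 = inner v (rho *m v)) ->
    (forall j : 'I_d,
       let v := normalize (v1 d p x j) in `|inner v psi| ^+ 2 = inner v (rho *m v)) ->
    (forall j : 'I_d,
       let v := normalize (v2 d p alpha x j) in `|inner v psi| ^+ 2 = inner v (rho *m v)) ->
    (forall j : 'I_d,
       let v := normalize (v3 d p y j) in `|inner v psi| ^+ 2 = inner v (rho *m v)) ->
    (forall j : 'I_d,
       let v := normalize (v4 d p alpha y j) in `|inner v psi| ^+ 2 = inner v (rho *m v)) ->
    rho = pure_state psi.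
Proof.
move=> d_gt0 p_orth x_root x_inj y_root y_inj eia_nreal psi rho _ [rho_herm [rho_psd _]].
move=> He H1 H2 H3 H4; have size_p := p_orth.1.
have nodes := quad_poly_eq0_nodes d_gt0 p_orth x_root x_inj y_root y_inj.
apply: (pure_state_determined size_p eia_nreal rho_herm rho_psd).
- by move=> k; have := measurement_quad_eq0 (He k); rewrite inner_e_vec_mulmx.
- apply: nodes => [j | j j_lt];
    apply: (measured_pvec_quad_eq0 size_p d_gt0 (oner_neq0 _)).
    by rewrite -v1_pvec; exact: H1.
  by rewrite -(v3_pvec y_root j_lt); exact: H3.
- have eia0_neq0 : eia alpha 0 != 0 by rewrite eia0 oner_neq0.
  apply: nodes => [j | j j_lt]; apply: (measured_pvec_quad_eq0 size_p d_gt0 eia0_neq0).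
    exact: H2.
  by rewrite -(v4_pvec y_root alpha j_lt); exact: H4.
Qed.
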